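(* The subgroup of $G_2=\mathrm{GL}_2(\mathbb{F}_q)$ generated by $P_2^\ell$ and $\overline{P}_2^\ell$ is $G_2^\ell$.
   Context: $p$ is a prime, $q$ a power of $p$, $\ell\ne p$ a prime. $\mathbb{F}_q^{\times,\ell}$ is the subgroup of elements of $\mathbb{F}_q^\times$ of order prime to $\ell$, $G_2^\ell=\det^{-1}(\mathbb{F}_q^{\times,\ell})\subset G_2$. $P_2=\{\begin{psmallmatrix}a&b\\0&1\end{psmallmatrix}\}$ is the mirabolic subgroup, $\overline{P}_2=\{\begin{psmallmatrix}a&0\\c&1\end{psmallmatrix}\}$ the opposite mirabolic subgroup, $P_2^\ell=P_2\cap G_2^\ell$ and $\overline{P}_2^\ell=\overline{P}_2\cap G_2^\ell$. *)

From HB Require Import structures.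
From mathcomp Require Import all_boot all_order all_algebra all_fingroup.
Set Implicit Arguments. Unset Strict Implicit. Unset Printing Implicit Defensive.
Import GRing.Theory.
Local Open Scope ring_scope.

Lemma GL_det_unit (F : finFieldType) (g : {'GL_2[F]}) :
  \det (GLval g) \is a GRing.unit.
Proof. by rewrite -unitmxE; exact: GL_unit. Qed.

Definition detu (F : finFieldType) (g : {'GL_2[F]}) : {unit F} :=
  FinRing.Unit (GL_det_unit g).

Definition Fxl (F : finFieldType) (l : nat) : {set {unit F}} :=
  [set u : {unit F} | coprime #[u]%g l].

Definition G2l (F : finFieldType) (l : nat) : {set {'GL_2[F]}} :=
  [set g : {'GL_2[F]} | detu g \in Fxl F l].

Definition P2 (F : finFieldType) : {set {'GL_2[F]}} :=
  [set g : {'GL_2[F]} | (GLval g ord_max ord0 == 0) && (GLval g ord_max ord_max == 1)].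

Definition P2bar (F : finFieldType) : {set {'GL_2[F]}} :=
  [set g : {'GL_2[F]} | (GLval g ord0 ord_max == 0) && (GLval g ord_max ord_max == 1)].

Definition P2l (F : finFieldType) (l : nat) := P2 F :&: G2l F l.
Definition P2barl (F : finFieldType) (l : nat) := P2bar F :&: G2l F l.

From HB Require Import structures.
From mathcomp Require Import all_boot all_order all_algebra all_fingroup.
From mathcomp Require Import pgroup ring.
Set Implicit Arguments. Unset Strict Implicit. Unset Printing Implicit Defensive.
Import GRing.Theory.
Local Open Scope ring_scope.

(* A matrix g = (a b; c d) with c != 0 factors as (1 x; 0 1) (det g 0; c 1) (1 y; 0 1),
   and the middle factor lies in the opposite mirabolic with the same determinant
   as g.  If c = 0, then a != 0 and left multiplication by (1 0; 1 1) moves a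
   into the lower left corner.  Since unipotents have determinant 1, this works
   for the preimage under det of any subgroup of F^x, not only of F_q^{x,l}. *)

Definition mx2 (R : Type) (a b c d : R) : 'M[R]_2 :=
  \matrix_(i < 2, j < 2) if (i : nat) == 0%N then (if (j : nat) == 0%N then a else b)
                         else (if (j : nat) == 0%N then c else d).

Lemma mx2_entries (R : Type) (M : 'M[R]_2) :
  M = mx2 (M ord0 ord0) (M ord0 ord_max) (M ord_max ord0) (M ord_max ord_max).
Proof.
apply/matrixP => i j; rewrite mxE.
by case: i j => [[|[|?]] ?] [[|[|?]] ?] //; congr (M _ _); apply: val_inj.
Qed.

Lemma mulmx2 (R : pzSemiRingType) (a b c d a' b' c' d' : R) :
  mx2 a b c d *m mx2 a' b' c' d' =
  mx2 (a * a' + b * c') (a * b' + b * d') (c * a' + d * c') (c * b' + d * d').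
Proof.
apply/matrixP => i j; rewrite !mxE !big_ord_recr big_ord0 /= add0r !mxE /=.
by case: i j => [[|[|?]] ?] [[|[|?]] ?].
Qed.

Lemma det_mx2 (R : comPzRingType) (a b c d : R) : \det (mx2 a b c d) = a * d - b * c.
Proof.
rewrite (expand_det_row _ ord0) !big_ord_recr big_ord0 /= add0r /cofactor.
by rewrite !det_mx11 !mxE /= !expr0 !mul1r add0n expr1 mulN1r mulrN.
Qed.

Lemma mx2_upper_lower_upper (F : fieldType) (a b c d : F) : c != 0 ->
  mx2 a b c d =
  mx2 1 ((a - (a * d - b * c)) / c) 0 1 *m mx2 (a * d - b * c) 0 c 1
    *m mx2 1 ((d - 1) / c) 0 1.
Proof. by move=> c_neq0; rewrite !mulmx2; congr mx2; field. Qed.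

Section GL2.

Variable F : finFieldType.

Definition gl2 (a b c d : F) : {'GL_2[F]} := insubd (1%g : {'GL_2[F]}) (mx2 a b c d).

Lemma gl2K (a b c d : F) : a * d - b * c != 0 -> GLval (gl2 a b c d) = mx2 a b c d.
Proof.
move=> det_neq0; rewrite /gl2 insubdK //.
by rewrite -[_ \is a GRing.unit]/(_ \in unitmx) unitmxE det_mx2 unitfE.
Qed.

Lemma detu_gl2 (a b c d : F) :
  a * d - b * c != 0 -> val (detu (gl2 a b c d)) = a * d - b * c.
Proof. by move=> det_neq0; rewrite /= gl2K // det_mx2. Qed.

Lemma detuM (g h : {'GL_2[F]}) : detu (g * h)%g = (detu g * detu h)%g.
Proof. by apply: val_inj; rewrite /= -det_mulmx. Qed.

Lemma detu1 : detu (1%g : {'GL_2[F]}) = 1%g.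
Proof. by apply: val_inj; exact: det1. Qed.

Lemma unipotent_det_neq0 (x : F) : (1 * 1 - x * 0 != 0) * (1 * 1 - 0 * x != 0).
Proof. by rewrite mulr0 mul0r subr0 mul1r oner_neq0. Qed.

Lemma detu_upper_unipotent (x : F) : detu (gl2 1 x 0 1) = 1%g.
Proof.
by apply: val_inj; rewrite detu_gl2 ?unipotent_det_neq0 // mulr0 subr0 mul1r.
Qed.

Lemma detu_lower_unipotent (x : F) : detu (gl2 1 0 x 1) = 1%g.
Proof.
by apply: val_inj; rewrite detu_gl2 ?unipotent_det_neq0 // mul0r subr0 mul1r.
Qed.

Lemma upper_unipotent_in_P2 (x : F) : gl2 1 x 0 1 \in P2 F.
Proof. by rewrite inE gl2K ?unipotent_det_neq0 // !mxE /= !eqxx. Qed.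

Lemma gl2_in_P2bar (e c : F) : e != 0 -> gl2 e 0 c 1 \in P2bar F.
Proof.
by move=> e_neq0; rewrite inE gl2K ?mul0r ?subr0 ?mulr1 // !mxE /= !eqxx.
Qed.

Definition det_preim (D : {set {unit F}}) : {set {'GL_2[F]}} :=
  [set g : {'GL_2[F]} | detu g \in D].

Lemma det_preim_group_set (D : {group {unit F}}) : group_set (det_preim D).
Proof.
apply/group_setP; split=> [|g h]; rewrite !inE ?detu1 ?group1 // detuM.
exact: groupM.
Qed.

Canonical det_preim_group (D : {group {unit F}}) := Group (det_preim_group_set D).

Section Generation.

Variable D : {group {unit F}}.

Let mirabolics := <<(P2 F :&: det_preim D) :|: (P2bar F :&: det_preim D)>>%g.

Lemma upper_unipotent_in_mirabolics (x : F) : gl2 1 x 0 1 \in mirabolics.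
Proof.
apply: mem_gen; apply/setUP; left.
by rewrite inE upper_unipotent_in_P2 inE detu_upper_unipotent group1.
Qed.

Lemma gl2_P2bar_in_mirabolics (e c : F) : e != 0 ->
  detu (gl2 e 0 c 1) \in D -> gl2 e 0 c 1 \in mirabolics.
Proof.
move=> e_neq0 detD; apply: mem_gen; apply/setUP; right.
by rewrite inE gl2_in_P2bar // inE.
Qed.

Lemma mirabolics_lower_left_neq0 (g : {'GL_2[F]}) :
  g \in det_preim D -> GLval g ord_max ord0 != 0 -> g \in mirabolics.
Proof.
move=> gD c_neq0; have gE := mx2_entries (GLval g).
set a := GLval g ord0 ord0 in gE; set b := GLval g ord0 ord_max in gE.
set c := GLval g ord_max ord0 in c_neq0 gE; set d := GLval g ord_max ord_max in gE.
have detgE : \det (GLval g) = a * d - b * c by rewrite {1}gE det_mx2.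
set e := a * d - b * c in detgE.
have e_neq0 : e != 0 by rewrite -detgE; exact: (GL_det g).
have e_det_neq0 : e * 1 - 0 * c != 0 by rewrite mulr1 mul0r subr0.
set x := (a - e) / c; set y := (d - 1) / c.
pose u := gl2 1 x 0 1; pose v := gl2 e 0 c 1; pose w := gl2 1 y 0 1.
have -> : g = (u * v * w)%g.
  apply: val_inj; change (GLval g = GLval (u * v * w)%g).
  rewrite !GL_MxE !gl2K ?unipotent_det_neq0 // {1}gE.
  exact: mx2_upper_lower_upper.
rewrite !groupM ?upper_unipotent_in_mirabolics ?gl2_P2bar_in_mirabolics //.
suff -> : detu v = detu g by rewrite inE in gD.
by apply: val_inj; rewrite detu_gl2 //= detgE mulr1 mul0r subr0.
Qed.

Theorem mirabolics_generate_det_preim : mirabolics = det_preim D.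
Proof.
have gen_sub : mirabolics \subset det_preim D by rewrite gen_subG subUset !subsetIr.
apply/eqP; rewrite eqEsubset gen_sub; apply/subsetP => g gD.
have [c_eq0|] := eqVneq (GLval g ord_max ord0) 0; last first.
  exact: mirabolics_lower_left_neq0.
pose L := gl2 1 0 1 1.
have L_mirabolic : L \in mirabolics.
  by rewrite gl2_P2bar_in_mirabolics ?oner_neq0 // detu_lower_unipotent group1.
rewrite -(groupMl g L_mirabolic) mirabolics_lower_left_neq0 //.
  by rewrite groupM // (subsetP gen_sub).
rewrite GL_MxE gl2K ?unipotent_det_neq0 // (mx2_entries (GLval g)) mulmx2.
rewrite !mxE /= c_eq0 mul1r mulr0 addr0.
have := GL_det g; rewrite [X in \det X]mx2_entries det_mx2 c_eq0 mulr0 subr0.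
by apply: contra => /eqP ->; rewrite mul0r.
Qed.

End Generation.

Lemma Fxl_group_set (l : nat) : (0 < l)%N -> group_set (Fxl F l).
Proof.
move=> l_gt0; have FxlE u : (u \in Fxl F l) = (\pi(l)^'.-elt u)%g.
  by rewrite inE coprime_sym coprime_pi' ?order_gt0.
apply/group_setP; split=> [|u v]; rewrite !FxlE; first exact: p_elt1.
move=> pi_u pi_v; apply: p_eltM pi_u pi_v.
by apply: val_inj; rewrite !FinRing.val_unitM mulrC.
Qed.

End GL2.

Theorem lemmaB1 (F : finFieldType) (p l : nat) :
  prime p -> p \in [pchar F]%R -> prime l -> l != p ->
  <<P2l F l :|: P2barl F l>>%g = G2l F l.
Proof.
move=> _ _ /prime_gt0 l_gt0 _.
exact: (mirabolics_generate_det_preim (Group (Fxl_group_set F l_gt0))).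
Qed.
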